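(* Fix $k\ge1$. Let $H$ be the free abelian group with basis $\{h_{i_1\dots i_{2k+3}}\mid\{i_1,\dots,i_{2k+3}\}=\{1,\dots,2k+3\}\}$, and let $P$ be the subgroup of $H$ generated by all elements \[h_{i_1\dots i_{2k+3}}-\operatorname{sgn}(\sigma)\,h_{i_{\sigma(1)}\dots i_{\sigma(2k+3)}}\qquad(\sigma\in S_{2k+3})\] and \[h_{i_1\dots i_{2k}\,i_{2k+1}\,i_{2k+2}\,i_{2k+3}}+h_{i_1\dots i_{2k}\,i_{2k+2}\,i_{2k+3}\,i_{2k+1}}+h_{i_1\dots i_{2k}\,i_{2k+3}\,i_{2k+1}\,i_{2k+2}},\] where $\{i_1,\dots,i_{2k+3}\}=\{1,\dots,2k+3\}$. Then $h_{12\dots(2k+3)}\notin P$. *)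

From HB Require Import structures.
From mathcomp Require Import all_boot all_order all_algebra all_fingroup.
Set Implicit Arguments. Unset Strict Implicit. Unset Printing Implicit Defensive.
Import GRing.Theory.
Local Open Scope ring_scope.

(* Index set {1,...,2k+3} is represented by 'I_(k.*2.+3) = {0,...,2k+2}.
   A sequence (i_1,...,i_{2k+3}) with {i_1,...,i_{2k+3}} = {1,...,2k+3}
   is a permutation s : 'S_(k.*2.+3), with s (j-1) = i_j. *)

(* The free abelian group H with basis h_s, s a permutation:
   finitely supported (here: all, since the basis is finite) functions
   'S_n -> int. *)
Notation H n := {ffun 'S_n -> int}.

Definition hb (n : nat) (s : 'S_n) : H n := [ffun t => ((t == s) : nat)%:Z].

Inductive gen_subgroup (G : Type) (V : zmodType) (gens : G -> V) : V -> Prop :=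
  | gs_gen : forall g, gen_subgroup gens (gens g)
  | gs_zero : gen_subgroup gens 0
  | gs_opp : forall v, gen_subgroup gens v -> gen_subgroup gens (- v)
  | gs_add : forall v w, gen_subgroup gens v -> gen_subgroup gens w ->
      gen_subgroup gens (v + w).

Definition sgnZ (n : nat) (s : 'S_n) : int := (-1) ^+ odd_perm s.

(* Reordering: the sequence (i_{sigma(1)},...,i_{sigma(n)}) is the permutation
   j |-> s (sigma j), which in mathcomp's (left-to-right) composition is sigma * s. *)

(* The 3-cycle rho on positions 2k, 2k+1, 2k+2 (0-indexed), i.e. on the last
   three positions: rho(2k) = 2k+1, rho(2k+1) = 2k+2, rho(2k+2) = 2k.
   (p * q) x = q (p x), so tperm x y * tperm x z maps x->y, y->z, z->x. *)
Definition rho3 (k : nat) : 'S_(k.*2.+3) :=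
  (tperm (inord k.*2) (inord k.*2.+1) * tperm (inord k.*2) (inord k.*2.+2))%g.

Inductive Pgen (k : nat) : Type :=
  | PG_sign : 'S_(k.*2.+3) -> 'S_(k.*2.+3) -> Pgen k
  | PG_cyc : 'S_(k.*2.+3) -> Pgen k.

Definition Pgen_val (k : nat) (g : Pgen k) : H (k.*2.+3) :=
  match g with
  | PG_sign s sigma => hb s - hb (sigma * s)%g *~ sgnZ sigma
  | PG_cyc s => hb s + hb (rho3 k * s)%g + hb (rho3 k * rho3 k * s)%g
  end.

Definition P (k : nat) (v : H (k.*2.+3)) : Prop := gen_subgroup (@Pgen_val k) v.

From HB Require Import structures.
From mathcomp Require Import all_boot all_order all_algebra all_fingroup.

(* The homomorphism H -> Z sending h_s to sgn s kills every sign relation,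
   and since the 3-cycle rho is even it sends each cyclic relation to 3 sgn s.
   Hence it maps P into 3Z, whereas it maps h_1 to 1. *)

Set Implicit Arguments.
Unset Strict Implicit.
Unset Printing Implicit Defensive.

Import GRing.Theory.
Local Open Scope ring_scope.

Lemma gen_subgroup_image (G : Type) (V W : zmodType) (gens : G -> V)
    (f : {additive V -> W}) (S : zmodClosed W) :
  (forall g, f (gens g) \in S) -> forall v, gen_subgroup gens v -> f v \in S.
Proof.
move=> fgensS v; elim=> [g||w _ fwS|w1 w2 _ fw1S _ fw2S].
- exact: fgensS.
- by rewrite raddf0 rpred0.
- by rewrite raddfN rpredN.
- by rewrite raddfD rpredD.
Qed.

Section SignSum.

Variable n : nat.

Lemma sgnZM (p q : 'S_n) : sgnZ (p * q)%g = sgnZ p * sgnZ q.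
Proof. by rewrite /sgnZ odd_permM signr_addb. Qed.

Definition sign_sum (v : H n) : int := \sum_(s : 'S_n) v s * sgnZ s.

Lemma sign_sum_is_zmod_morphism : zmod_morphism sign_sum.
Proof.
move=> v w; rewrite /sign_sum -sumrB; apply: eq_bigr => s _.
by rewrite !ffunE mulrBl.
Qed.

HB.instance Definition _ :=
  GRing.isZmodMorphism.Build (H n) int sign_sum sign_sum_is_zmod_morphism.

Lemma sign_sum_hb (t : 'S_n) : sign_sum (hb t) = sgnZ t.
Proof.
rewrite /sign_sum (bigD1 t) //= big1 => [|s /negbTE neq_st].
  by rewrite ffunE eqxx mul1r addr0.
by rewrite ffunE neq_st mul0r.
Qed.

Lemma sign_sum_reorder (s sigma : 'S_n) :
  sign_sum (hb s - hb (sigma * s)%g *~ sgnZ sigma) = 0.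
Proof.
rewrite raddfB raddfMz /= !sign_sum_hb sgnZM -mulrzr intz mulrAC -mulrA.
by rewrite /sgnZ signrMK subrr.
Qed.

End SignSum.

Lemma odd_tpermM_tperm (T : finType) (x y z : T) :
  x != y -> x != z -> odd_perm (tperm x y * tperm x z)%g = false.
Proof. by move=> neq_xy neq_xz; rewrite odd_permM !odd_tperm neq_xy neq_xz. Qed.

Lemma odd_rho3 (k : nat) : odd_perm (rho3 k) = false.
Proof.
have inord_neq a b : (a < b < k.*2.+3)%N ->
    (inord a : 'I_(k.*2.+3)) != inord b.
  case/andP=> lt_ab lt_b; rewrite -val_eqE /= !inordK ?(ltn_trans lt_ab) //.
  by rewrite ltn_eqF.
by rewrite odd_tpermM_tperm ?inord_neq ?ltnSn ?leqnSn /=.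
Qed.

Lemma sign_sum_cycle (k : nat) (s : 'S_(k.*2.+3)) :
  sign_sum (hb s + hb (rho3 k * s)%g + hb (rho3 k * rho3 k * s)%g)
    = 3 * sgnZ s.
Proof.
have sgn_rho3M t : sgnZ (rho3 k * t)%g = sgnZ t.
  by rewrite sgnZM /sgnZ odd_rho3 mul1r.
rewrite -(mulgA (rho3 k)) !raddfD /= !sign_sum_hb !sgn_rho3M.
by rewrite mulr_natl !mulrS mulr0n addr0 addrA.
Qed.

Lemma sign_sum_P (k : nat) (v : H k.*2.+3) : P v -> (3 %| sign_sum v)%Z.
Proof.
apply: gen_subgroup_image; case=> [s sigma|s] /=.
- by rewrite sign_sum_reorder dvdz0.
- by rewrite sign_sum_cycle dvdz_mulr.
Qed.

Theorem lemma3p8 (k : nat) (hk : (1 <= k)%N) : ~ P (hb (1%g : 'S_(k.*2.+3))).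
Proof. by move/sign_sum_P; rewrite sign_sum_hb /sgnZ odd_perm1. Qed.
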